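(* Let $\phi_*\in(0,\pi/2)$, $R\ge r=1$, and consider the billiard map on $Q(\phi_*,R)$. For $x\in M_r$ with $n_1=0$, writing $\tau_0=|p(x_0)p(x_1)|$ and $\tau_1=|p(x_1)p(x_2)|$, one has $\tau_0+\tau_1>2d_0$, $\tau_0+\tau_1>2d_2$, and hence $\tau_0+\tau_1>d_0+d_2$.
   Context: Setting: $r=1$, $Q(\phi_*,R)=D(O_r,r)\cap D(O_R,R)$ with $|O_rO_R|=\sqrt{R^2-r^2\sin^2\phi_*}-r\cos\phi_*$; its boundary consists of $\Gamma_r$ (the major arc of $\partial D(O_r,r)$ with position angles $[\phi_*,2\pi-\phi_*]$) and $\Gamma_R\subset\partial D(O_R,R)$. Phase space $M=M_r\sqcup M_R$, coordinates $(\phi,\theta)$ with $\theta\in(0,\pi)$ the angle from the positive tangent direction; $p(x)$ the base point; $F$ the billiard map. $M_r^{out}=M_r\cap F^{-1}(M_R)$, $M_R^{out}=M_R\cap F^{-1}(M_r)$. For $x\in M_r$: $x_0=F^{n_0}x$ with $n_0=\inf\{n\ge0:F^nx\in M_r^{out}\}$, $x_1=Fx_0$, $n_1=\inf\{n\ge0:F^nx_1\in M_R^{out}\}$, $x_2=F^{n_1+1}x_1$; $d_0=r\sin\theta(x_0)$, $d_2=r\sin\theta(x_2)$. *)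

From Stdlib Require Import Reals Lra.
Open Scope R_scope.

(* Billiard in Q(phi_star, R) = D(O_r,1) ∩ D(O_R,R), r = 1.
   Coordinates: O_r = (0,0), O_R = (-c, 0) with
   c = |O_r O_R| = sqrt(R^2 - sin^2 phi_star) - cos phi_star.
   The corners are (cos phi_star, ± sin phi_star); Gamma_r is the unit-circle arc with
   position angles [phi_star, 2 pi - phi_star]; Gamma_R is the arc of the circle
   of radius R about O_R with position angles [-psi_star, psi_star],
   psi_star = asin (sin phi_star / R), i.e. the part of dD(O_R,R) on dQ. *)

Definition pt := (R * R)%type.

Definition cdist (ps Rb : R) : R := sqrt (Rb ^ 2 - (sin ps) ^ 2) - cos ps.
Definition psist (ps Rb : R) : R := asin (sin ps / Rb).

(* A phase point: side = true for M_r, false for M_R; ang = position angle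
   phi on the corresponding circle (about O_r resp. O_R); th = theta. *)
Record PS := mkPS { side : bool; ang : R; th : R }.

Definition bpos (ps Rb : R) (x : PS) : pt :=
  if side x then (cos (ang x), sin (ang x))
  else (- cdist ps Rb + Rb * cos (ang x), Rb * sin (ang x)).

Definition tang (x : PS) : pt := (- sin (ang x), cos (ang x)).
Definition nrm (x : PS) : pt := (- cos (ang x), - sin (ang x)).

(* unit velocity making angle theta with the positive tangent, pointing inward *)
Definition vel (x : PS) : pt :=
  (cos (th x) * fst (tang x) + sin (th x) * fst (nrm x),
   cos (th x) * snd (tang x) + sin (th x) * snd (nrm x)).

Definition padd (p q : pt) : pt := (fst p + fst q, snd p + snd q).
Definition pscal (t : R) (p : pt) : pt := (t * fst p, t * snd p).
Definition dot (p q : pt) : R := fst p * fst q + snd p * snd q.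
Definition edist (p q : pt) : R :=
  sqrt ((fst p - fst q) ^ 2 + (snd p - snd q) ^ 2).

Definition InM (ps Rb : R) (x : PS) : Prop :=
  0 < th x < PI /\
  (if side x then ps <= ang x <= 2 * PI - ps
   else - psist ps Rb <= ang x <= psist ps Rb).
Definition InMr (ps Rb : R) (x : PS) : Prop := side x = true /\ InM ps Rb x.
Definition InMR (ps Rb : R) (x : PS) : Prop := side x = false /\ InM ps Rb x.

(* base point not a corner (the billiard map is undefined at corner hits) *)
Definition NonCorner (ps Rb : R) (x : PS) : Prop :=
  if side x then ps < ang x < 2 * PI - ps
  else - psist ps Rb < ang x < psist ps Rb.

Definition InQint (ps Rb : R) (q : pt) : Prop :=
  fst q ^ 2 + snd q ^ 2 < 1 /\
  (fst q + cdist ps Rb) ^ 2 + snd q ^ 2 < Rb ^ 2.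

Definition Step (ps Rb : R) (x y : PS) : Prop :=
  InM ps Rb x /\ InM ps Rb y /\ NonCorner ps Rb y /\
  exists t : R, 0 < t /\
    bpos ps Rb y = padd (bpos ps Rb x) (pscal t (vel x)) /\
    (forall s, 0 < s < t -> InQint ps Rb (padd (bpos ps Rb x) (pscal s (vel x)))) /\
    vel y = padd (vel x) (pscal (- 2 * dot (vel x) (nrm y)) (nrm y)).

Inductive Iter (ps Rb : R) : nat -> PS -> PS -> Prop :=
| Iter0 : forall x, Iter ps Rb O x x
| IterS : forall n x y z, Step ps Rb x y -> Iter ps Rb n y z -> Iter ps Rb (S n) x z.

Definition InMrOut (ps Rb : R) (x : PS) : Prop :=
  InMr ps Rb x /\ exists y, Step ps Rb x y /\ InMR ps Rb y.
Definition InMROut (ps Rb : R) (x : PS) : Prop :=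
  InMR ps Rb x /\ exists y, Step ps Rb x y /\ InMr ps Rb y.

From Stdlib Require Import Reals Lra Psatz.
Open Scope R_scope.

(* Write p_i = p(x_i), v_i = vel x_i and t_i = tau_i.  Since p_0
   lies on the unit circle and the flight p_0 -> p_1 stays inside the unit
   disk, it is shorter than the chord of the unit circle along v_0, whose
   length is 2 d_0.  The point p_2 also lies on the unit circle: x_1 is in
   M_R^out, and all flights from x_1 end at the same point.  Computing the
   power |p_1|^2 - 1 of p_1 with respect to the unit circle along the two
   flights gives  t0^2 - 2 t0 d0 = t1^2 - 2 t1 d2,  and the reflection at the
   arc Gamma_R, whose inward normal points away from O_r, strictly decreases
   the projection of the velocity on p_1:  d2 - t1 < t0 - d0. *)

Lemma dot_comm p q : dot p q = dot q p.
Proof. destruct p, q; unfold dot; simpl; ring. Qed.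

Lemma dot_pscal_l k p q : dot (pscal k p) q = k * dot p q.
Proof. destruct p, q; unfold dot, pscal; simpl; ring. Qed.

Lemma dot_ray_l p t v w : dot (padd p (pscal t v)) w = dot p w + t * dot v w.
Proof. destruct p, v, w; unfold dot, padd, pscal; simpl; ring. Qed.

Lemma dot_ray_r w p t v : dot w (padd p (pscal t v)) = dot w p + t * dot w v.
Proof. destruct p, v, w; unfold dot, padd, pscal; simpl; ring. Qed.

Lemma norm2_ray p t v : dot v v = 1 ->
  dot (padd p (pscal t v)) (padd p (pscal t v)) = dot p p + 2 * t * dot p v + t ^ 2.
Proof.
  intro Hv. rewrite dot_ray_l, !dot_ray_r, (dot_comm v p), Hv. ring.
Qed.

Lemma norm2_coords q : fst q ^ 2 + snd q ^ 2 = dot q q.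
Proof. unfold dot; ring. Qed.

Lemma edist_ray p t v : 0 <= t -> dot v v = 1 -> edist p (padd p (pscal t v)) = t.
Proof.
  intros Ht Hv. destruct p as [a b], v as [e f]; unfold edist, padd, pscal, dot in *; cbn [fst snd] in *.
  replace ((a - (a + t * e)) ^ 2 + (b - (b + t * f)) ^ 2) with (t ^ 2 * (e * e + f * f)) by ring.
  rewrite Hv, Rmult_1_r. apply sqrt_pow2; exact Ht.
Qed.

Lemma nrm_unit x : dot (nrm x) (nrm x) = 1.
Proof.
  unfold dot, nrm; simpl. pose proof (sin2_cos2 (ang x)). unfold Rsqr in *. nra.
Qed.

Lemma vel_unit x : dot (vel x) (vel x) = 1.
Proof.
  unfold dot, vel, tang, nrm; simpl.
  pose proof (sin2_cos2 (th x)) as Eth; pose proof (sin2_cos2 (ang x)) as Eang.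
  unfold Rsqr in *.
  transitivity ((sin (th x) * sin (th x) + cos (th x) * cos (th x)) *
     (sin (ang x) * sin (ang x) + cos (ang x) * cos (ang x))); [ring|].
  rewrite Eth, Eang; ring.
Qed.

Lemma vel_nrm x : dot (vel x) (nrm x) = sin (th x).
Proof.
  unfold dot, vel, tang, nrm; simpl.
  pose proof (sin2_cos2 (ang x)) as Eang. unfold Rsqr in *.
  transitivity (sin (th x) * (sin (ang x) * sin (ang x) + cos (ang x) * cos (ang x))); [ring|].
  rewrite Eang; ring.
Qed.

Lemma reflection_closed_form v y :
  vel y = padd v (pscal (- 2 * dot v (nrm y)) (nrm y)) ->
  vel y = padd v (pscal (2 * sin (th y)) (nrm y)).
Proof.
  intro Hrefl.
  assert (Hvn : dot v (nrm y) = - sin (th y))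
    by (rewrite <- vel_nrm, Hrefl, dot_ray_l, nrm_unit; ring).
  rewrite Hrefl, Hvn. f_equal. f_equal. ring.
Qed.

Lemma bpos_Mr ps Rb x : side x = true -> bpos ps Rb x = pscal (-1) (nrm x).
Proof. intro Hs; unfold bpos, pscal, nrm; rewrite Hs; simpl; f_equal; ring. Qed.

(* The centres are at distance 0 <= |O_r O_R| < R (O_R lies on the side of
   O_r opposite to the corners). *)
Lemma cdist_bounds ps Rb : 0 < ps < PI / 2 -> 1 <= Rb -> 0 <= cdist ps Rb < Rb.
Proof.
  intros Hps HR. unfold cdist.
  assert (Hcp : 0 < cos ps) by (apply cos_gt_0; lra).
  pose proof (sin2_cos2 ps) as E; unfold Rsqr in E.
  assert (Hq2 : sqrt (Rb ^ 2 - sin ps ^ 2) * sqrt (Rb ^ 2 - sin ps ^ 2) = Rb ^ 2 - sin ps ^ 2)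
    by (apply sqrt_sqrt; nra).
  pose proof (sqrt_pos (Rb ^ 2 - sin ps ^ 2)). nra.
Qed.

(* The half-opening angle psi_* of Gamma_R satisfies R cos psi_* = c + cos phi_*:
   this is the abscissa of the corners measured from O_R. *)
Lemma R_cos_psist ps Rb : 0 < ps < PI / 2 -> 1 <= Rb ->
  Rb * cos (psist ps Rb) = cdist ps Rb + cos ps.
Proof.
  intros Hps HR. unfold psist, cdist.
  assert (Hsp : 0 < sin ps) by (apply sin_gt_0; lra).
  assert (Hcp : 0 < cos ps) by (apply cos_gt_0; lra).
  pose proof (sin2_cos2 ps) as E; unfold Rsqr in E.
  set (w := sin ps / Rb).
  assert (Hw : w * Rb = sin ps) by (unfold w; field; lra).
  assert (Hs1 : sin ps < 1) by nra.
  assert (Hw1 : 0 < w < 1) by (split; nra).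
  rewrite cos_asin by lra.
  replace (sqrt (Rb ^ 2 - sin ps ^ 2) - cos ps + cos ps) with (sqrt (Rb ^ 2 - sin ps ^ 2)) by ring.
  rewrite <- (sqrt_pow2 Rb) at 1 by lra.
  rewrite <- sqrt_mult_alt by nra. f_equal.
  rewrite <- Hw. unfold Rsqr. ring.
Qed.

(* The interior of Gamma_R lies strictly inside the unit disk, unless the two
   circles coincide; in both cases a non-corner point of the boundary at
   distance 1 from O_r is opposite to its inward normal. *)
Lemma unit_boundary_point ps Rb x : 0 < ps < PI / 2 -> 1 <= Rb ->
  InM ps Rb x -> NonCorner ps Rb x -> dot (bpos ps Rb x) (bpos ps Rb x) = 1 ->
  bpos ps Rb x = pscal (-1) (nrm x).
Proof.
  intros Hps HR HM HNC Hunit.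
  destruct (side x) eqn:Hs; [exact (bpos_Mr ps Rb x Hs)|].
  unfold NonCorner in HNC; rewrite Hs in HNC.
  unfold bpos, dot, pscal, nrm in *; rewrite Hs in *; simpl in *.
  pose proof (cdist_bounds ps Rb Hps HR) as Hc.
  pose proof (R_cos_psist ps Rb Hps HR) as HRpsi.
  pose proof (sin2_cos2 (ang x)) as Eang; pose proof (sin2_cos2 ps) as Eps; unfold Rsqr in *.
  set (c := cdist ps Rb) in *.
  destruct (Req_dec c 0) as [Hc0|Hc0].
  - assert (HR1 : Rb = 1) by (rewrite Hc0 in Hunit; nra).
    rewrite Hc0, HR1. f_equal; ring.
  - exfalso.
    set (psi := psist ps Rb) in *.
    assert (Hpsi : 0 < psi <= PI / 2)
      by (pose proof (asin_bound (sin ps / Rb)); unfold psi, psist in *; lra).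
    assert (Hcos : cos psi < cos (ang x)).
    { destruct (Rle_or_lt 0 (ang x)).
      - apply cos_decreasing_1; lra.
      - rewrite <- (cos_neg (ang x)). apply cos_decreasing_1; lra. }
    assert (Hsq : sqrt (Rb ^ 2 - sin ps ^ 2) * sqrt (Rb ^ 2 - sin ps ^ 2) = Rb ^ 2 - sin ps ^ 2)
      by (apply sqrt_sqrt; nra).
    assert (Hq : sqrt (Rb ^ 2 - sin ps ^ 2) = c + cos ps) by (unfold c, cdist; ring).
    rewrite Hq in Hsq.
    assert (Hfar : c + cos ps < Rb * cos (ang x))
      by (rewrite <- HRpsi; apply Rmult_lt_compat_l; lra).
    assert (Hcpos : 0 < c) by lra.
    nra.
Qed.

Lemma bpos_not_interior ps Rb x : ~ InQint ps Rb (bpos ps Rb x).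
Proof.
  unfold InQint, bpos; intros [Hr HR].
  pose proof (sin2_cos2 (ang x)) as Eang; unfold Rsqr in Eang.
  destruct (side x); simpl in *; nra.
Qed.

Lemma MR_bpos_nrm_neg ps Rb x : 0 < ps < PI / 2 -> 1 <= Rb ->
  side x = false -> dot (bpos ps Rb x) (nrm x) < 0.
Proof.
  intros Hps HR Hs.
  unfold bpos, nrm, dot; rewrite Hs; simpl.
  pose proof (cdist_bounds ps Rb Hps HR) as Hc.
  pose proof (sin2_cos2 (ang x)) as Eang; unfold Rsqr in Eang.
  pose proof (COS_bound (ang x)). nra.
Qed.

Lemma step_flight ps Rb x y : Step ps Rb x y ->
  let tau := edist (bpos ps Rb x) (bpos ps Rb y) in
  0 < tau /\ bpos ps Rb y = padd (bpos ps Rb x) (pscal tau (vel x)) /\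
  (forall s, 0 < s < tau -> InQint ps Rb (padd (bpos ps Rb x) (pscal s (vel x)))) /\
  vel y = padd (vel x) (pscal (2 * sin (th y)) (nrm y)).
Proof.
  intros [_ [_ [_ [t [Ht [Hpos [Hint Hrefl]]]]]]] tau.
  assert (Htau : tau = t) by (unfold tau; rewrite Hpos; apply edist_ray; [lra | apply vel_unit]).
  rewrite Htau. refine (conj Ht (conj Hpos (conj Hint _))).
  apply reflection_closed_form; exact Hrefl.
Qed.

(* The billiard map is single-valued on base points: a flight ends at the
   first boundary point it meets. *)
Lemma step_target_unique ps Rb x y z : Step ps Rb x y -> Step ps Rb x z ->
  bpos ps Rb y = bpos ps Rb z.
Proof.
  intros Hy Hz.
  destruct (step_flight _ _ _ _ Hy) as [Hty [Hpy [Hinty _]]].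
  destruct (step_flight _ _ _ _ Hz) as [Htz [Hpz [Hintz _]]].
  set (ty := edist (bpos ps Rb x) (bpos ps Rb y)) in *.
  set (tz := edist (bpos ps Rb x) (bpos ps Rb z)) in *.
  destruct (Rtotal_order ty tz) as [Hlt|[Heq|Hgt]].
  - exfalso. apply (bpos_not_interior ps Rb y). rewrite Hpy. apply Hintz; lra.
  - rewrite Hpy, Hpz, Heq. reflexivity.
  - exfalso. apply (bpos_not_interior ps Rb z). rewrite Hpz. apply Hinty; lra.
Qed.

(* A flight entering the unit disk from a point p of the unit circle and
   staying inside it is not longer than the chord, of length -2 <p, v>. *)
Lemma chord_bound p v t : dot p p = 1 -> dot v v = 1 -> dot p v < 0 ->
  (forall s, 0 < s < t -> dot (padd p (pscal s v)) (padd p (pscal s v)) < 1) ->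
  t <= - 2 * dot p v.
Proof.
  intros Hp Hv Hin Hint.
  destruct (Rle_or_lt t (- 2 * dot p v)) as [Hle|Hgt]; [exact Hle|exfalso].
  set (s := (t - 2 * dot p v) / 2).
  assert (Hs : 0 < s < t) by (unfold s; nra).
  specialize (Hint s Hs). rewrite norm2_ray, Hp in Hint by exact Hv.
  unfold s in Hint. nra.
Qed.

Lemma InQint_unit_disk ps Rb q : InQint ps Rb q -> dot q q < 1.
Proof. intros [Hq _]. rewrite <- norm2_coords. exact Hq. Qed.

Lemma departure_Mr ps Rb x : side x = true ->
  dot (bpos ps Rb x) (bpos ps Rb x) = 1 /\ dot (bpos ps Rb x) (vel x) = - sin (th x).
Proof.
  intro Hs. rewrite (bpos_Mr ps Rb x Hs), !dot_pscal_l.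
  rewrite (dot_comm (nrm x) (pscal _ _)), dot_pscal_l, (dot_comm (nrm x) (vel x)).
  rewrite nrm_unit, vel_nrm. split; ring.
Qed.

Lemma arrival_unit_circle ps Rb y v :
  bpos ps Rb y = pscal (-1) (nrm y) ->
  vel y = padd v (pscal (2 * sin (th y)) (nrm y)) ->
  dot (bpos ps Rb y) v = sin (th y).
Proof.
  intros Hpos Hrefl.
  assert (Hvn : dot v (nrm y) = - sin (th y))
    by (pose proof (vel_nrm y) as E; rewrite Hrefl, dot_ray_l, nrm_unit in E; lra).
  rewrite Hpos, dot_pscal_l, dot_comm, Hvn. ring.
Qed.

Lemma flight_from_Mr ps Rb x0 x1 : side x0 = true -> Step ps Rb x0 x1 ->
  let tau := edist (bpos ps Rb x0) (bpos ps Rb x1) in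
  tau <= 2 * sin (th x0) /\
  dot (bpos ps Rb x1) (vel x0) = tau - sin (th x0) /\
  dot (bpos ps Rb x1) (bpos ps Rb x1) = 1 - 2 * tau * sin (th x0) + tau ^ 2.
Proof.
  intros Hs0 H01 tau.
  pose proof H01 as [[Hth0 _] _].
  destruct (step_flight _ _ _ _ H01) as [_ [Hp1 [Hint _]]]; fold tau in Hp1, Hint.
  destruct (departure_Mr ps Rb x0 Hs0) as [Hp0 Hp0v0].
  assert (Hd0 : 0 < sin (th x0)) by (apply sin_gt_0; lra).
  assert (Hchord : tau <= - 2 * dot (bpos ps Rb x0) (vel x0)).
  { apply chord_bound; [exact Hp0 | apply vel_unit | lra | ].
    intros s Hs; apply (InQint_unit_disk ps Rb), Hint, Hs. }
  rewrite Hp1, dot_ray_l, norm2_ray, vel_unit, Hp0, Hp0v0 by apply vel_unit.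
  rewrite Hp0v0 in Hchord. repeat split; [lra | ring | ring].
Qed.

Lemma reflection_at_Gamma_R ps Rb x0 x1 : 0 < ps < PI / 2 -> 1 <= Rb ->
  side x1 = false -> Step ps Rb x0 x1 ->
  dot (bpos ps Rb x1) (vel x1) < dot (bpos ps Rb x1) (vel x0).
Proof.
  intros Hps HR Hs1 H01.
  pose proof H01 as [_ [[Hth1 _] _]].
  destruct (step_flight _ _ _ _ H01) as [_ [_ [_ Hv1]]].
  assert (Hsin1 : 0 < sin (th x1)) by (apply sin_gt_0; lra).
  pose proof (MR_bpos_nrm_neg ps Rb x1 Hps HR Hs1).
  rewrite Hv1, dot_ray_r. nra.
Qed.

(* A point x1 of M_R^out sends every flight to the unit circle, so its image
   x2 is opposite to its inward normal. *)
Lemma image_of_MR_out ps Rb x1 x2 : 0 < ps < PI / 2 -> 1 <= Rb ->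
  InMROut ps Rb x1 -> Step ps Rb x1 x2 -> bpos ps Rb x2 = pscal (-1) (nrm x2).
Proof.
  intros Hps HR [_ [y [H1y [Hsy _]]]] H12.
  pose proof H12 as [_ [HM2 [HNC2 _]]].
  apply unit_boundary_point; auto.
  rewrite <- (step_target_unique _ _ _ _ _ H1y H12).
  exact (proj1 (departure_Mr ps Rb y Hsy)).
Qed.

Lemma flight_to_unit_circle ps Rb x1 x2 : Step ps Rb x1 x2 ->
  bpos ps Rb x2 = pscal (-1) (nrm x2) ->
  let tau := edist (bpos ps Rb x1) (bpos ps Rb x2) in
  dot (bpos ps Rb x1) (vel x1) = sin (th x2) - tau /\
  dot (bpos ps Rb x1) (bpos ps Rb x1) = 1 - 2 * tau * sin (th x2) + tau ^ 2.
Proof.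
  intros H12 Hx2 tau.
  destruct (step_flight _ _ _ _ H12) as [_ [Hp2 [_ Hv2]]]; fold tau in Hp2.
  pose proof (arrival_unit_circle ps Rb x2 (vel x1) Hx2 Hv2) as Hp2v1.
  assert (Hp2sq : dot (bpos ps Rb x2) (bpos ps Rb x2) = 1)
    by (rewrite Hx2, !dot_pscal_l, (dot_comm (nrm x2)), dot_pscal_l, nrm_unit; ring).
  rewrite Hp2, dot_ray_l, vel_unit in Hp2v1.
  rewrite Hp2, norm2_ray in Hp2sq by apply vel_unit.
  split; nra.
Qed.

(* The algebraic core.  With a = t0 - d0 and b = d2 - t1, the hypotheses say
   b < a <= d0 and a^2 - d0^2 = b^2 - d2^2; hence |a|, |b| are bounded by d0,
   d2 and a - b exceeds |d0 - d2|. *)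
Lemma two_flight_inequalities t0 t1 d0 d2 :
  0 < t0 -> 0 < t1 -> 0 < d0 -> 0 < d2 -> t0 <= 2 * d0 ->
  d2 - t1 < t0 - d0 -> t0 ^ 2 - 2 * t0 * d0 = t1 ^ 2 - 2 * t1 * d2 ->
  t0 + t1 > 2 * d0 /\ t0 + t1 > 2 * d2 /\ t0 + t1 > d0 + d2.
Proof.
  intros Ht0 Ht1 Hd0 Hd2 Hchord Hrefl Hpower.
  set (a := t0 - d0) in *. set (b := d2 - t1) in *.
  assert (Hpow : (a - b) * (a + b) = (d0 - d2) * (d0 + d2)) by (unfold a, b; nra).
  assert (Ha : - d0 < a <= d0) by (unfold a; lra).
  assert (Hb : - d2 <= b < d2) by (unfold a, b in *; nra).
  assert (Hsum : - (d0 + d2) < a + b < d0 + d2) by lra.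
  assert (Hgap : a - b > d0 - d2 /\ a - b > d2 - d0).
  { split; destruct (Rle_or_lt (a - b) (d0 - d2)), (Rle_or_lt (a - b) (d2 - d0)); nra. }
  unfold a, b in *. lra.
Qed.

Theorem mainTheorem8 :
  forall (ps Rb : R), 0 < ps < PI / 2 -> 1 <= Rb ->
  forall (x x0 x1 x2 : PS) (n0 : nat),
    InMr ps Rb x ->
    Iter ps Rb n0 x x0 -> InMrOut ps Rb x0 ->
    (forall (n : nat) (z : PS), (n < n0)%nat -> Iter ps Rb n x z -> ~ InMrOut ps Rb z) ->
    Step ps Rb x0 x1 ->
    InMROut ps Rb x1 ->
    Step ps Rb x1 x2 ->
    let tau0 := edist (bpos ps Rb x0) (bpos ps Rb x1) in
    let tau1 := edist (bpos ps Rb x1) (bpos ps Rb x2) in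
    let d0 := 1 * sin (th x0) in
    let d2 := 1 * sin (th x2) in
    tau0 + tau1 > 2 * d0 /\ tau0 + tau1 > 2 * d2 /\ tau0 + tau1 > d0 + d2.
Proof.
  intros ps Rb Hps HR x x0 x1 x2 n0 _ _ [[Hs0 _] _] _ H01 Hx1 H12 tau0 tau1 d0 d2.
  unfold d0, d2; rewrite !Rmult_1_l.
  pose proof Hx1 as [[Hs1 _] _].
  pose proof H12 as [_ [[Hth2 _] _]].
  assert (Hd2 : 0 < sin (th x2)) by (apply sin_gt_0; lra).
  destruct (step_flight _ _ _ _ H01) as [Ht0 _].
  destruct (step_flight _ _ _ _ H12) as [Ht1 _].
  destruct (flight_from_Mr ps Rb x0 x1 Hs0 H01) as [Hchord [Hp1v0 Hp1sq0]].
  pose proof (reflection_at_Gamma_R ps Rb x0 x1 Hps HR Hs1 H01) as Hrefl.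
  pose proof (image_of_MR_out ps Rb x1 x2 Hps HR Hx1 H12) as Hx2.
  destruct (flight_to_unit_circle ps Rb x1 x2 H12 Hx2) as [Hp1v1 Hp1sq1].
  fold tau0 in Ht0, Hchord, Hp1v0, Hp1sq0; fold tau1 in Ht1, Hp1v1, Hp1sq1.
  apply two_flight_inequalities; lra.
Qed.
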